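(* Let $A$ be a finite left brace of odd order with cyclic additive group and Z-group multiplicative group, written as $A=\bar{A}\times\bar{B}$ as described in the context. Then $\mathrm{Soc}(A)=\mathrm{Soc}(\bar{A})\times(B_{m+1}\times\dots\times B_r\times I_1\times\dots\times I_m)$. In particular, the quotient left brace $A/\mathrm{Soc}(A)$ has cyclic multiplicative group.
   Context: A left brace is a set $A$ with $(A,+)$ abelian group, $(A,\circ)$ group, $a\circ(b+c)=a\circ b-a+a\circ c$; $\lambda_a(b):=-a+a\circ b$, and $\mathrm{Soc}(A)=\{a\mid\lambda_a=\mathrm{id}\}$, an ideal. A trivial left brace has $a\circ b=a+b$. A Z-group is a finite group with all Sylow subgroups cyclic. Decomposition: there are integers $v,m,r\ge 0$ with $m\le r$, pairwise distinct odd primes $q_1,\dots,q_v,p_1,\dots,p_r$ with $p_1<\dots<p_r$, positive integers $\gamma_i,\beta_j$, left braces $A_1,\dots,A_v$ and $B_1,\dots,B_r$ with cyclic additive groups, $|A_i|=q_i^{\gamma_i}$, $|B_j|=p_j^{\beta_j}$, $B_{m+1},\dots,B_r$ trivial, and a homomorphism $\alpha:(B_1\times\dots\times B_m,\circ)\to\mathrm{Aut}(B_{m+1}\times\dots\times B_r,+)$ whose restriction to each $B_i$ ($i\le m$) is nontrivial and whose image acts nontrivially on each $B_i$ ($i>m$), such that $A=\bar A\times\bar B$ (direct product of left braces), where $\bar A=A_1\times\dots\times A_v$ is a direct product of left braces and $\bar B=(B_{m+1}\times\dots\times B_r)\rtimes_\alpha(B_1\times\dots\times B_m)$ is the semidirect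 product of left braces: additive group the direct product, and $(x,y)\circ(x',y')=(x\circ\alpha(y)(x'),y\circ y')$. For $j\le m$, $I_j:=\mathrm{Soc}(B_j)\cap\ker\alpha$. *)

From HB Require Import structures.
From mathcomp Require Import all_boot all_order all_fingroup all_solvable.

Set Implicit Arguments.
Unset Strict Implicit.
Unset Printing Implicit Defensive.

Record braceOps (T : Type) := BraceOps {
  badd : T -> T -> T;
  bopp : T -> T;
  bzero : T;
  bcirc : T -> T -> T }.

Definition is_left_brace (T : Type) (o : braceOps T) : Prop :=
  (forall a b c, badd o a (badd o b c) = badd o (badd o a b) c) /\
  (forall a b, badd o a b = badd o b a) /\
  (forall a, badd o (bzero o) a = a) /\
  (forall a, badd o (bopp o a) a = bzero o) /\
  (forall a b c, bcirc o a (bcirc o b c) = bcirc o (bcirc o a b) c) /\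
  (exists e, (forall a, bcirc o e a = a /\ bcirc o a e = a) /\
             (forall a, exists b, bcirc o b a = e /\ bcirc o a b = e)) /\
  (forall a b c, bcirc o a (badd o b c)
                 = badd o (badd o (bcirc o a b) (bopp o a)) (bcirc o a c)).

Definition blambda (T : Type) (o : braceOps T) (a b : T) : T :=
  badd o (bopp o a) (bcirc o a b).

Definition socle (T : finType) (o : braceOps T) : {set T} :=
  [set a | [forall b, blambda o a b == b]].

Definition is_trivial_brace (T : Type) (o : braceOps T) : Prop :=
  forall a b, bcirc o a b = badd o a b.

Definition add_cyclic (T : Type) (o : braceOps T) : Prop :=
  exists g, forall a, exists n, a = iter n (badd o g) (bzero o).

Definition prodOps (I : finType) (T : I -> finType) (o : forall i, braceOps (T i))
  : braceOps {dffun forall i, T i} :=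
  BraceOps (fun x y : {dffun forall i, T i} =>
              (finfun (fun i => badd (o i) (x i) (y i)) : {dffun forall i, T i}))
           (fun x : {dffun forall i, T i} =>
              (finfun (fun i => bopp (o i) (x i)) : {dffun forall i, T i}))
           (finfun (fun i => bzero (o i)) : {dffun forall i, T i})
           (fun x y : {dffun forall i, T i} =>
              (finfun (fun i => bcirc (o i) (x i) (y i)) : {dffun forall i, T i})).

Definition pairOps (T1 T2 : Type) (o1 : braceOps T1) (o2 : braceOps T2)
  : braceOps (T1 * T2) :=
  BraceOps (fun u w => (badd o1 u.1 w.1, badd o2 u.2 w.2))
           (fun u => (bopp o1 u.1, bopp o2 u.2))
           (bzero o1, bzero o2)
           (fun u w => (bcirc o1 u.1 w.1, bcirc o2 u.2 w.2)).

Definition sdprodOps (N H : Type) (oN : braceOps N) (oH : braceOps H)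
  (alpha : H -> N -> N) : braceOps (N * H) :=
  BraceOps (fun u w => (badd oN u.1 w.1, badd oH u.2 w.2))
           (fun u => (bopp oN u.1, bopp oH u.2))
           (bzero oN, bzero oH)
           (fun u w => (bcirc oN u.1 (alpha u.2 w.1), bcirc oH u.2 w.2)).

Definition only_at (I : finType) (T : I -> finType) (o : forall i, braceOps (T i))
  (y : {dffun forall i, T i}) (i : I) : bool :=
  [forall k, (k != i) ==> (y k == bzero (o k))].

(* I_i = Soc(B_i) \cap ker alpha, B_i viewed inside the product of the B_k *)
Definition I_factor (I : finType) (T : I -> finType) (o : forall i, braceOps (T i))
  (NT : finType) (alpha : {dffun forall i, T i} -> NT -> NT) (i : I) : {set T i} :=
  [set b in socle (o i) |
     [forall y in [set: {dffun forall k : I, T k}],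
        ((y i == b) && only_at o y i) ==> [forall x, alpha y x == x]]].

Definition I_prod (I : finType) (T : I -> finType) (o : forall i, braceOps (T i))
  (NT : finType) (alpha : {dffun forall i, T i} -> NT -> NT) : {set {dffun forall i, T i}} :=
  [set y : {dffun forall i, T i} | [forall i, y i \in I_factor o alpha i]].

(* the prime attached to index k of B_1,...,B_r with r = m + s *)
Definition concat_fun (m s : nat) (f1 : 'I_m -> nat) (f2 : 'I_s -> nat) (k : 'I_(m + s)) : nat :=
  match split k with inl i => f1 i | inr j => f2 j end.

From mathcomp Require Import all_boot all_order all_fingroup all_solvable.

Set Implicit Arguments.
Unset Strict Implicit.
Unset Printing Implicit Defensive.

(* The socle of a finite left brace A is read off coordinatewise from a
   decomposition A = Abar x (N x|_alpha H) with N trivial: (u, (w, y)) acts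
   trivially iff u is in Soc(Abar), y is in Soc(H) and alpha y = id.  As the
   orders of the factors B_i of H are pairwise coprime, the element of H with
   i-th coordinate y_i and all others 0 is a power of y (Chinese remainders),
   and y is the product of these elements; so the last two conditions say that
   y_i lies in Soc(B_i) and alpha (y_i) = id for every i, i.e. y is in
   I_1 x ... x I_m.
   The factors A_i and B_i have prime power order and their multiplicative
   groups embed in the Z-group (A, o), so they are cyclic.  Hence a commutator
   of (A, o) has the form (0, (w, 0)), which lies in the socle: A / Soc(A) is
   an abelian quotient of a Z-group, hence cyclic. *)

(* The additive half of [is_left_brace]: it is all that the computation of
   socles needs, and unlike [is_left_brace] it is plainly inherited by
   [sdprodOps]. *)
Definition add_group_laws (T : Type) (o : braceOps T) : Prop :=
  [/\ forall a b c, badd o a (badd o b c) = badd o (badd o a b) c,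
      forall a b, badd o a b = badd o b a,
      forall a, badd o (bzero o) a = a
    & forall a, badd o (bopp o a) a = bzero o].

Section AddGroup.
Variables (T : Type) (o : braceOps T).
Hypothesis add_o : add_group_laws o.
Local Notation "a + b" := (badd o a b).
Local Notation "- a" := (bopp o a).
Local Notation "0" := (bzero o).

Lemma baddA a b c : a + (b + c) = (a + b) + c. Proof. by case: add_o. Qed.
Lemma baddC a b : a + b = b + a. Proof. by case: add_o. Qed.
Lemma badd0 a : 0 + a = a. Proof. by case: add_o. Qed.
Lemma baddNl a : - a + a = 0. Proof. by case: add_o. Qed.
Lemma badd0r a : a + 0 = a. Proof. by rewrite baddC badd0. Qed.
Lemma baddNr a : a + - a = 0. Proof. by rewrite baddC baddNl. Qed.

Lemma baddI a : injective (badd o a).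
Proof. by move=> b c h; rewrite -[b]badd0 -(baddNl a) -baddA h baddA baddNl badd0. Qed.

Lemma blambda_id a b : blambda o a b = b <-> bcirc o a b = a + b.
Proof.
rewrite /blambda; split=> [h|->]; last by rewrite baddA baddNl badd0.
by rewrite -{2}h baddA baddNr badd0.
Qed.

End AddGroup.

Lemma morph_bzero (T T' : Type) (o : braceOps T) (o' : braceOps T') (h : T -> T') :
  add_group_laws o -> add_group_laws o' ->
  {morph h : a b / badd o a b >-> badd o' a b} -> h (bzero o) = bzero o'.
Proof.
move=> add_o add_o' hD; apply: (baddI add_o' (a := h (bzero o))).
by rewrite -hD (badd0r add_o) (badd0r add_o').
Qed.

Lemma socleP (T : finType) (o : braceOps T) (add_o : add_group_laws o) a :
  reflect (forall b, bcirc o a b = badd o a b) (a \in socle o).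
Proof.
rewrite inE; apply: (iffP forallP) => h b.
  exact/(blambda_id add_o)/eqP.
exact/eqP/(blambda_id add_o).
Qed.

Section LeftBrace.
Variables (T : Type) (o : braceOps T).
Hypothesis brace_o : is_left_brace o.
Local Notation "a + b" := (badd o a b).
Local Notation "- a" := (bopp o a).
Local Notation "0" := (bzero o).
Local Notation "a * b" := (bcirc o a b).

Lemma brace_add_group : add_group_laws o.
Proof. by case: brace_o => ? [? [? [? _]]]; split. Qed.

Let add_o := brace_add_group.

Lemma bcircA a b c : a * (b * c) = (a * b) * c.
Proof. by case: brace_o => _ [_ [_ [_ []]]]. Qed.

Lemma bcircDr a b c : a * (b + c) = (a * b + - a) + a * c.
Proof. by case: brace_o => _ [_ [_ [_ [_ [_]]]]]. Qed.

(* From [a * (0 + 0) = a * 0 - a + a * 0]. *)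
Lemma bcirc0r a : a * 0 = a.
Proof.
have := bcircDr a 0 0; rewrite (badd0 add_o) -{1}[a * 0](badd0r add_o) -(baddA add_o).
move/(baddI add_o)/(congr1 (badd o a)).
by rewrite (baddA add_o) (baddNr add_o) (badd0 add_o) (badd0r add_o).
Qed.

Lemma bcirc_unit : (forall a, 0 * a = a) /\ (forall a, exists b, b * a = 0).
Proof.
case: brace_o => _ [_ [_ [_ [_ [[e [unit_e inv_e]] _]]]]].
have e0 : e = 0 by rewrite -[e]bcirc0r; case: (unit_e 0).
split=> a; first by case: (unit_e a); rewrite e0.
by have [b [ba _]] := inv_e a; exists b; rewrite -e0.
Qed.

Lemma bcirc0l a : 0 * a = a. Proof. by case: bcirc_unit. Qed.

Lemma bcircI a : injective (bcirc o a).
Proof.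
move=> b c h; have [a' a'a] := (proj2 bcirc_unit) a.
by rewrite -[b]bcirc0l -[c]bcirc0l -a'a -!bcircA h.
Qed.

End LeftBrace.

Section FiniteBrace.
Variables (T : finType) (o : braceOps T).
Hypothesis brace_o : is_left_brace o.
Let add_o := brace_add_group brace_o.

Lemma socle0 : bzero o \in socle o.
Proof. by apply/(socleP add_o) => b; rewrite (bcirc0l brace_o) (badd0 add_o). Qed.

Lemma socle_circ a b : a \in socle o -> b \in socle o -> bcirc o a b \in socle o.
Proof.
move=> /(socleP add_o) Sa /(socleP add_o) Sb; apply/(socleP add_o) => c.
rewrite -(bcircA brace_o) Sb (bcircDr brace_o) !Sa -(baddA add_o (badd o a b)).
by rewrite (baddA add_o (bopp o a)) (baddNl add_o) (badd0 add_o).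
Qed.

(* Lagrange's theorem for [(T, o)], through its regular representation in [{perm T}]. *)
Lemma iter_bcirc_card a x : iter #|T| (bcirc o a) x = x.
Proof.
pose rep b := perm (@bcircI _ _ brace_o b).
have rep_morph b c : rep (bcirc o b c) = (rep c * rep b)%g.
  by apply/permP => y; rewrite permM !permE (bcircA brace_o).
have rep_inj : injective rep.
  move=> b c /(congr1 (fun s : {perm T} => s (bzero o))).
  by rewrite !permE !(bcirc0r brace_o).
have repG : group_set (rep @: T).
  apply/group_setP; split.
    apply/imsetP; exists (bzero o) => //; apply/permP => y.
    by rewrite perm1 permE (bcirc0l brace_o).
  move=> _ _ /imsetP [b _ ->] /imsetP [c _ ->].
  by rewrite -rep_morph imset_f.
have rep_a : rep a \in Group repG by apply: imset_f.
have := expg_cardG rep_a.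
rewrite card_imset //= => /(congr1 (fun s : {perm T} => s x)).
have iter_rep n y : iter n (rep a) y = iter n (bcirc o a) y.
  by elim: n => //= n ->; rewrite permE.
by rewrite perm1 permX iter_rep.
Qed.

Lemma iter_bcirc_mod a n x : iter n (bcirc o a) x = iter (n %% #|T|) (bcirc o a) x.
Proof.
rewrite {1}(divn_eq n #|T|) iterD; move: (iter _ _ x) => y.
by elim: (n %/ #|T|) => //= k IH; rewrite mulSn iterD IH iter_bcirc_card.
Qed.

End FiniteBrace.

Section Product.
Variables (I : finType) (T : I -> finType) (o : forall i, braceOps (T i)).
Local Notation P := (prodOps o).
Local Notation prodT := {dffun forall i, T i}.

Definition dsingle i (a : T i) : prodT := finfun (dfwith (fun k => bzero (o k)) a).
Arguments dsingle : clear implicits.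

Lemma dsingle_inj i : injective (dsingle i).
Proof. by move=> a b /ffunP /(_ i); rewrite !ffunE !dfwith_in. Qed.

Lemma only_atP (z : prodT) i : only_at o z i -> z = dsingle i (z i).
Proof.
move=> /forallP z_i; apply/ffunP => k; rewrite ffunE.
have [<-|ik] := eqVneq i k; first by rewrite dfwith_in.
by rewrite dfwith_out //; apply/eqP/(implyP (z_i k)); rewrite eq_sym.
Qed.

Lemma only_at_dsingle i a : only_at o (dsingle i a) i.
Proof. by apply/forall_inP => k ki; rewrite ffunE dfwith_out // eq_sym. Qed.

Lemma prodOps_add_group : (forall i, add_group_laws (o i)) -> add_group_laws P.
Proof.
move=> add_o; split=> *; apply/ffunP => i; rewrite !ffunE.
- exact: baddA.
- exact: baddC.
- exact: badd0.
- exact: baddNl.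
Qed.

Lemma socle_prodOps : (forall i, add_group_laws (o i)) ->
  socle P = [set x : prodT | [forall i, x i \in socle (o i)]].
Proof.
move=> add_o; apply/setP => x; rewrite inE.
apply/(socleP (prodOps_add_group add_o))/forallP => [Sx i | Sx y].
  apply/(socleP (add_o i)) => b.
  by have /ffunP/(_ i) := Sx (dsingle i b); rewrite !ffunE dfwith_in.
by apply/ffunP => i; rewrite !ffunE; apply/(socleP (add_o i)).
Qed.

Hypothesis brace_o : forall i, is_left_brace (o i).

Lemma prodOps_brace : is_left_brace P.
Proof.
have add_o i := brace_add_group (brace_o i).
have [addA addC add0 addNl] := prodOps_add_group add_o.
have inv_i i : exists inv : T i -> T i, forall a, bcirc (o i) (inv a) a = bzero (o i).
  exact: (@fin_all_exists _ (fun=> T i) _ (proj2 (bcirc_unit (brace_o i)))).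
have [inv inv_l] := fin_all_exists inv_i.
do 4!(split; first by []); split; [|split].
- by move=> a b c; apply/ffunP => i; rewrite !ffunE (bcircA (brace_o i)).
- exists (bzero P); split=> a.
    split; apply/ffunP => i; rewrite !ffunE.
      exact: (bcirc0l (brace_o i)).
    exact: (bcirc0r (brace_o i)).
  exists (finfun (fun i => inv i (a i))); split; apply/ffunP => i; rewrite !ffunE //.
  apply: (@bcircI _ _ (brace_o i) (inv i (a i))).
  by rewrite (bcircA (brace_o i)) inv_l (bcirc0l (brace_o i)) (bcirc0r (brace_o i)).
- by move=> a b c; apply/ffunP => i; rewrite !ffunE (bcircDr (brace_o i)).
Qed.

Lemma dsingle_circ i (a b : T i) :
  dsingle i (bcirc (o i) a b) = bcirc P (dsingle i a) (dsingle i b).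
Proof.
apply/ffunP => k; rewrite !ffunE.
have [<-|ik] := eqVneq i k; first by rewrite !dfwith_in.
by rewrite !dfwith_out // (bcirc0l (brace_o k)).
Qed.

Lemma prodOps_bcircC : (forall i, commutative (bcirc (o i))) -> commutative (bcirc P).
Proof. by move=> oC a b; apply/ffunP => i; rewrite !ffunE oC. Qed.

Lemma iter_prodOps y n z i : iter n (bcirc P y) z i = iter n (bcirc (o i) (y i)) (z i).
Proof. by elim: n => //= n IH; rewrite ffunE IH. Qed.

(* Chinese remainders: [n = 1] modulo [#|T i|] and [n = 0] modulo the other orders. *)
Lemma dsingle_iter y i : (forall j k, j != k -> coprime #|T j| #|T k|) ->
  exists n, iter n (bcirc P y) (bzero P) = dsingle i (y i).
Proof.
move=> coprimeT; pose D := \prod_(k | k != i) #|T k|.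
have coD : coprime #|T i| D.
  apply: (big_ind (coprime #|T i|)) => [|a b|k]; first exact: coprimen1.
    by rewrite coprimeMr => -> ->.
  by rewrite eq_sym; apply: coprimeT.
exists (chinese #|T i| D 1 0); apply/ffunP => k.
rewrite iter_prodOps (iter_bcirc_mod (brace_o k)) /dsingle !ffunE.
have [<-|ik] := eqVneq i k.
  rewrite (chinese_modl coD) -(iter_bcirc_mod (brace_o i)) dfwith_in /=.
  exact: (bcirc0r (brace_o i)).
have dvdD : #|T k| %| D by rewrite /D (bigD1 k) ?dvdn_mulr // eq_sym.
by rewrite -(modn_dvdm _ dvdD) (chinese_modr coD) !mod0n dfwith_out.
Qed.

End Product.

Arguments dsingle {I T} o i a.

Lemma pairOps_add_group (T1 T2 : Type) (o1 : braceOps T1) (o2 : braceOps T2) :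
  add_group_laws o1 -> add_group_laws o2 -> add_group_laws (pairOps o1 o2).
Proof.
move=> add_o1 add_o2; split=> [a b c|a b|[a1 a2]|a] /=.
- by rewrite (baddA add_o1) (baddA add_o2).
- by rewrite (baddC add_o1) (baddC add_o2).
- by rewrite (badd0 add_o1) (badd0 add_o2).
- by rewrite (baddNl add_o1) (baddNl add_o2).
Qed.

Lemma socle_pairOps (T1 T2 : finType) (o1 : braceOps T1) (o2 : braceOps T2) :
  add_group_laws o1 -> add_group_laws o2 ->
  socle (pairOps o1 o2) = setX (socle o1) (socle o2).
Proof.
move=> add_o1 add_o2; apply/setP => -[a1 a2]; rewrite in_setX.
apply/(socleP (pairOps_add_group add_o1 add_o2))/andP => [Sa | [Sa1 Sa2] [b1 b2]].
  split; [apply/(socleP add_o1) => b | apply/(socleP add_o2) => b].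
    by case: (Sa (b, bzero o2)).
  by case: (Sa (bzero o1, b)).
by rewrite /= (socleP add_o1 _ Sa1) (socleP add_o2 _ Sa2).
Qed.

Section SemidirectProduct.
Variables (N H : finType) (oN : braceOps N) (oH : braceOps H) (alpha : H -> N -> N).
Hypotheses (add_oN : add_group_laws oN) (add_oH : add_group_laws oH).

Lemma sdprodOps_add_group : add_group_laws (sdprodOps oN oH alpha).
Proof. exact: (pairOps_add_group add_oN add_oH). Qed.

Lemma socle_sdprodOps : is_trivial_brace oN ->
  socle (sdprodOps oN oH alpha) =
  setX [set: N] [set y in socle oH | [forall x, alpha y x == x]].
Proof.
move=> trivN; apply/setP => -[w y]; rewrite in_setX in_setT andTb [y \in _]inE.
apply/(socleP sdprodOps_add_group)/andP => [Swy | [Sy fix_y] [x y']].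
  split; first by apply/(socleP add_oH) => y'; case: (Swy (bzero oN, y')).
  apply/forallP => x; apply/eqP/(baddI add_oN (a := w)); rewrite -trivN.
  by case: (Swy (x, bzero oH)).
by rewrite /= trivN (eqP (forallP fix_y x)) (socleP add_oH _ Sy).
Qed.

End SemidirectProduct.

Lemma socle_morph (T T' : finType) (o : braceOps T) (o' : braceOps T')
    (f : T -> T') (g : T' -> T) :
  add_group_laws o -> add_group_laws o' -> cancel f g -> cancel g f ->
  {morph f : a b / badd o a b >-> badd o' a b} ->
  {morph f : a b / bcirc o a b >-> bcirc o' a b} ->
  f @: socle o = socle o'.
Proof.
move=> add_o add_o' fK gK f_add f_circ; apply/setP => z.
rewrite -[z]gK (mem_imset _ _ (can_inj fK)).
apply/(socleP add_o)/(socleP add_o') => Sgz b.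
  by rewrite -[b]gK -f_add -f_circ Sgz.
by apply: (can_inj fK); rewrite f_add f_circ Sgz.
Qed.

Section SocleKernel.
Variables (I : finType) (T : I -> finType) (o : forall i, braceOps (T i)).
Variables (NT : finType) (alpha : {dffun forall i, T i} -> NT -> NT).
Local Notation P := (prodOps o).
Hypothesis brace_o : forall i, is_left_brace (o i).
Hypothesis coprimeT : forall i k, i != k -> coprime #|T i| #|T k|.
Hypothesis alpha_inj : forall y, injective (alpha y).
Hypothesis alpha_morph : forall y y' x, alpha (bcirc P y y') x = alpha y (alpha y' x).

Let brace_P := prodOps_brace brace_o.

Lemma act_bzero x : alpha (bzero P) x = x.
Proof. by apply: (@alpha_inj (bzero P)); rewrite -alpha_morph (bcirc0l brace_P). Qed.

Lemma act_iter y n x : alpha (iter n (bcirc P y) (bzero P)) x = iter n (alpha y) x.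
Proof. by elim: n => /= [|n IH]; rewrite ?act_bzero // alpha_morph IH. Qed.

Lemma I_factorP i b :
  reflect (b \in socle (o i) /\ forall x, alpha (dsingle o i b) x = x)
          (b \in I_factor o alpha i).
Proof.
rewrite [b \in I_factor _ _ _]inE; apply: (iffP andP) => -[Sb fix_b]; split=> //.
  move=> x; have /implyP := forall_inP fix_b _ (in_setT (dsingle o i b)).
  by rewrite ffunE dfwith_in eqxx only_at_dsingle => /(_ isT) /forallP /(_ x) /eqP.
apply/forall_inP => z _; apply/implyP => /andP [/eqP zi /only_atP z_i].
by apply/forallP => x; rewrite z_i zi fix_b.
Qed.

Lemma act_fixed_dsingles (y : {dffun forall i, T i}) :
  (forall i x, alpha (dsingle o i (y i)) x = x) -> forall x, alpha y x = x.
Proof.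
move=> fix_i.
pose restr (s : seq I) : {dffun forall i, T i} :=
  finfun (fun k => if k \in s then y k else bzero (o k)).
suff fix_restr s : uniq s -> forall x, alpha (restr s) x = x.
  have -> : y = restr (enum I) by apply/ffunP => k; rewrite ffunE mem_enum.
  exact/fix_restr/enum_uniq.
elim: s => [_ x | i s IH /andP [i_s uniq_s] x].
  have -> : restr [::] = bzero P by apply/ffunP => k; rewrite !ffunE.
  exact: act_bzero.
have -> : restr (i :: s) = bcirc P (dsingle o i (y i)) (restr s).
  apply/ffunP => k; rewrite !ffunE inE.
  have [<-|ik] := eqVneq i k.
    by rewrite (negbTE i_s) dfwith_in (bcirc0r (brace_o i)).
  by rewrite dfwith_out // (bcirc0l (brace_o k)).
by rewrite alpha_morph fix_i IH.
Qed.

Lemma I_prodE : I_prod o alpha = [set y in socle P | [forall x, alpha y x == x]].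
Proof.
apply/setP => y; rewrite [y \in I_prod _ _]inE [RHS]inE.
rewrite (socle_prodOps (fun i => brace_add_group (brace_o i))) inE.
apply/forallP/andP => [yI | [/forallP Sy /forallP fix_y] i].
  split; first by apply/forallP => i; case/I_factorP: (yI i).
  apply/forallP => x; apply/eqP; apply: act_fixed_dsingles => i.
  by case/I_factorP: (yI i).
apply/I_factorP; split=> // x.
have [n <-] := dsingle_iter brace_o y i coprimeT.
rewrite act_iter; elim: n => //= n ->; exact/eqP.
Qed.

End SocleKernel.

Lemma morph_commg_bzero (gT : finGroupType) (T : Type) (o : braceOps T) (phi : gT -> T) :
  is_left_brace o -> commutative (bcirc o) ->
  {morph phi : a b / (a * b)%g >-> bcirc o a b} ->
  forall a b, phi [~ a, b]%g = bzero o.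
Proof.
move=> brace_o oC phiM a b; apply: (bcircI brace_o (a := phi (b * a)%g)).
by rewrite -phiM -commgC (bcirc0r brace_o) !phiM oC.
Qed.

(* The image of [(T, o)] is a nilpotent subgroup of a Z-group, hence cyclic. *)
Lemma Zgroup_bcircC (gT : finGroupType) (T : finType) (o : braceOps T) (p : nat)
    (phi : T -> gT) :
  Zgroup [set: gT] -> is_left_brace o -> p.-nat #|T| -> injective phi ->
  {morph phi : a b / bcirc o a b >-> (a * b)%g} -> commutative (bcirc o).
Proof.
move=> ZgT brace_o pT phi_inj phiM.
have phi1 : phi (bzero o) = 1%g.
  by apply/(mulgI (phi (bzero o))); rewrite mulg1 -phiM (bcirc0l brace_o).
have imG : group_set (phi @: T).
  apply/group_setP; split; first by rewrite -phi1 imset_f.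
  by move=> _ _ /imsetP [a _ ->] /imsetP [b _ ->]; rewrite -phiM imset_f.
have Z_im : Zgroup (Group imG) by apply: ZgroupS ZgT; apply: subsetT.
have p_im : pgroup p (Group imG) by rewrite /pgroup /= card_imset.
have /centsP im_ab := cyclic_abelian (nil_Zgroup_cyclic Z_im (pgroup_nil p_im)).
by move=> a b; apply: phi_inj; rewrite !phiM; apply: im_ab; apply: imset_f.
Qed.

Lemma prodOps_Zgroup_bcircC (gT : finGroupType) (I : finType) (T : I -> finType)
    (o : forall i, braceOps (T i)) (p : I -> nat) (phi : {dffun forall i, T i} -> gT) :
  Zgroup [set: gT] -> (forall i, is_left_brace (o i)) -> (forall i, (p i).-nat #|T i|) ->
  injective phi -> {morph phi : a b / bcirc (prodOps o) a b >-> (a * b)%g} ->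
  commutative (bcirc (prodOps o)).
Proof.
move=> ZgT brace_o pT phi_inj phiM; apply: prodOps_bcircC => i.
apply: (Zgroup_bcircC (phi := phi \o dsingle o i) ZgT (brace_o i) (pT i)).
  exact: inj_comp phi_inj (@dsingle_inj _ _ o i).
by move=> a b /=; rewrite (dsingle_circ brace_o) phiM.
Qed.

Lemma socle_group_set (gT : finGroupType) (add : gT -> gT -> gT) (opp : gT -> gT) zero :
  let o := BraceOps add opp zero (fun a b => (a * b)%g) in
  is_left_brace o -> group_set (socle o).
Proof.
move=> o brace_o; apply/group_setP; split; last exact: socle_circ.
have -> : 1%g = zero by rewrite -[zero]mulg1; exact: esym (bcirc0l brace_o 1%g).
exact: socle0.
Qed.

Lemma Zgroup_quotient_cyclic (gT : finGroupType) (G H : {group gT}) :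
  Zgroup G -> G^`(1)%g \subset H -> cyclic (G / H).
Proof.
move=> ZG /sub_der1_abelian GH_ab.
exact: nil_Zgroup_cyclic (morphim_Zgroup _ ZG) (abelian_nil GH_ab).
Qed.

Lemma coprime_pfactor_cards (I : finType) (T : I -> finType) (p e : I -> nat) :
  (forall i, prime (p i)) -> injective p -> (forall i, #|T i| = p i ^ e i) ->
  forall i k, i != k -> coprime #|T i| #|T k|.
Proof.
move=> p_prime p_inj cardT i k ik; rewrite !cardT; apply/coprimeXl/coprimeXr.
by rewrite prime_coprime // dvdn_prime2 // (inj_eq p_inj).
Qed.

Section Decomposition.
Variables (gT : finGroupType) (add : gT -> gT -> gT) (opp : gT -> gT) (zero : gT).
Variables (IA IH IN : finType).
Variables (TA : IA -> finType) (oA : forall i, braceOps (TA i)).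
Variables (TH : IH -> finType) (oH : forall k, braceOps (TH k)).
Variables (TN : IN -> finType) (oN : forall j, braceOps (TN j)).
Local Notation prodA := {dffun forall i, TA i}.
Local Notation prodH := {dffun forall k, TH k}.
Local Notation prodN := {dffun forall j, TN j}.
Variable alpha : prodH -> prodN -> prodN.
Variables (f : gT -> prodA * (prodN * prodH)) (g : prodA * (prodN * prodH) -> gT).
Local Notation oG := (BraceOps add opp zero (fun a b : gT => (a * b)%g)).
Local Notation oAbar := (prodOps oA).
Local Notation oHbar := (prodOps oH).
Local Notation oNbar := (prodOps oN).
Local Notation oBbar := (sdprodOps oNbar oHbar alpha).
Local Notation oTot := (pairOps oAbar oBbar).

Hypotheses (brace_G : is_left_brace oG) (brace_A : forall i, is_left_brace (oA i)).
Hypotheses (brace_H : forall k, is_left_brace (oH k)) (brace_N : forall j, is_left_brace (oN j)).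
Hypothesis triv_N : is_trivial_brace oNbar.
Hypothesis coprime_H : forall k l, k != l -> coprime #|TH k| #|TH l|.
Hypothesis alpha_inj : forall y, injective (alpha y).
Hypothesis alpha_morph : forall y y' x, alpha (bcirc oHbar y y') x = alpha y (alpha y' x).
Hypothesis alpha_bzero : forall y, alpha y (bzero oNbar) = bzero oNbar.
Hypotheses (fK : cancel f g) (gK : cancel g f).
Hypothesis f_add : {morph f : a b / add a b >-> badd oTot a b}.
Hypothesis f_circ : {morph f : a b / (a * b)%g >-> bcirc oTot a b}.

Let brace_Abar := prodOps_brace brace_A.
Let brace_Hbar := prodOps_brace brace_H.
Let brace_Nbar := prodOps_brace brace_N.
Let add_Abar := brace_add_group brace_Abar.
Let add_Hbar := brace_add_group brace_Hbar.
Let add_Nbar := brace_add_group brace_Nbar.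

Lemma socle_decomposition :
  f @: socle oG = setX (socle oAbar) (setX [set: prodN] (I_prod oH alpha)).
Proof.
have add_Tot := pairOps_add_group add_Abar (sdprodOps_add_group alpha add_Nbar add_Hbar).
rewrite (socle_morph (brace_add_group brace_G) add_Tot fK gK f_add f_circ).
rewrite socle_pairOps ?socle_sdprodOps ?(I_prodE brace_H coprime_H alpha_inj alpha_morph) //.
exact: sdprodOps_add_group.
Qed.

Let g_circ : {morph g : x y / bcirc oTot x y >-> (x * y)%g}.
Proof. by move=> x y; apply: (can_inj fK); rewrite f_circ !gK. Qed.

Hypothesis ZgT : Zgroup [set: gT].
Variables (pA : IA -> nat) (pH : IH -> nat).
Hypotheses (pA_TA : forall i, (pA i).-nat #|TA i|) (pH_TH : forall k, (pH k).-nat #|TH k|).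

Lemma Abar_bcircC : commutative (bcirc oAbar).
Proof.
pose phi x := g (x, bzero oBbar).
apply: (prodOps_Zgroup_bcircC (phi := phi) ZgT brace_A pA_TA).
  by move=> x y /(can_inj gK) [].
move=> x y; rewrite -g_circ; congr g.
change ((bcirc oAbar x y, bzero oBbar) =
        (bcirc oAbar x y, (bcirc oNbar (bzero oNbar) (alpha (bzero oHbar) (bzero oNbar)),
                           bcirc oHbar (bzero oHbar) (bzero oHbar)))).
by rewrite alpha_bzero (bcirc0l brace_Nbar) (bcirc0l brace_Hbar).
Qed.

Lemma Hbar_bcircC : commutative (bcirc oHbar).
Proof.
pose phi y := g (bzero oAbar, (bzero oNbar, y)).
apply: (prodOps_Zgroup_bcircC (phi := phi) ZgT brace_H pH_TH).
  by move=> x y /(can_inj gK) [].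
move=> x y; rewrite -g_circ; congr g.
change ((bzero oAbar, (bzero oNbar, bcirc oHbar x y)) =
        (bcirc oAbar (bzero oAbar) (bzero oAbar),
         (bcirc oNbar (bzero oNbar) (alpha x (bzero oNbar)), bcirc oHbar x y))).
by rewrite alpha_bzero (bcirc0l brace_Nbar) (bcirc0l brace_Abar).
Qed.

(* Commutators are mapped to 0 in the commutative factors [Abar] and [Hbar]. *)
Lemma der1_sub_socle : [set: gT]^`(1)%g \subset socle oG.
Proof.
have socle_gT := socle_group_set brace_G.
rewrite derg1 -[socle oG]/(gval (Group socle_gT)) gen_subG.
apply/subsetP => _ /imset2P [a b _ _ ->].
rewrite -(mem_imset _ _ (can_inj fK)) socle_decomposition.
have fA_morph : {morph (fun c => (f c).1) : a b / (a * b)%g >-> bcirc oAbar a b}.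
  by move=> c d; rewrite f_circ.
have fH_morph : {morph (fun c => (f c).2.2) : a b / (a * b)%g >-> bcirc oHbar a b}.
  by move=> c d; rewrite f_circ.
move: (morph_commg_bzero brace_Abar Abar_bcircC fA_morph a b).
move: (morph_commg_bzero brace_Hbar Hbar_bcircC fH_morph a b).
case: (f _) => u [w y] /= -> ->.
rewrite !in_setX in_setT (socle0 brace_Abar) (I_prodE brace_H coprime_H alpha_inj alpha_morph).
rewrite inE (socle0 brace_Hbar); apply/forallP => x.
by rewrite (act_bzero brace_H alpha_inj alpha_morph).
Qed.

Lemma cyclic_quotient_socle : cyclic ([set: gT] / socle oG).
Proof.
exact: (Zgroup_quotient_cyclic (H := Group (socle_group_set brace_G)) ZgT der1_sub_socle).
Qed.

End Decomposition.

Theorem mainTheorem9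
  (gT : finGroupType) (add : gT -> gT -> gT) (opp : gT -> gT) (zero : gT)
  (v m s : nat)
  (q gamma : 'I_v -> nat) (p1 beta1 : 'I_m -> nat) (p2 beta2 : 'I_s -> nat)
  (TA : 'I_v -> finType) (oA : forall i, braceOps (TA i))
  (TB1 : 'I_m -> finType) (oB1 : forall i, braceOps (TB1 i))
  (TB2 : 'I_s -> finType) (oB2 : forall j, braceOps (TB2 j))
  (alpha : {dffun forall i, TB1 i} -> {dffun forall j, TB2 j} -> {dffun forall j, TB2 j})
  (f : gT -> {dffun forall i, TA i} * ({dffun forall j, TB2 j} * {dffun forall i, TB1 i})) :
  let oG := BraceOps add opp zero (fun a b : gT => (a * b)%g) in
  let oH := prodOps oB1 in
  let oN := prodOps oB2 in
  let oAbar := prodOps oA in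
  let oBbar := sdprodOps oN oH alpha in
  let oTot := pairOps oAbar oBbar in
  let pr := concat_fun p1 p2 in
  (* A: finite left brace of odd order, cyclic additive group, Z-group (A,o) *)
  is_left_brace oG -> odd #|gT| -> add_cyclic oG -> Zgroup [set: gT] ->
  (* the primes *)
  (forall i, prime (q i) && odd (q i)) ->
  (forall k, prime (pr k) && odd (pr k)) ->
  injective q -> (forall i k, q i != pr k) ->
  (forall k l : 'I_(m + s), k < l -> pr k < pr l) ->
  (forall i, 0 < gamma i) -> (forall k, 0 < concat_fun beta1 beta2 k) ->
  (* the factors *)
  (forall i, [/\ is_left_brace (oA i), add_cyclic (oA i) & #|TA i| = q i ^ gamma i]) ->
  (forall i, [/\ is_left_brace (oB1 i), add_cyclic (oB1 i) & #|TB1 i| = p1 i ^ beta1 i]) ->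
  (forall j, [/\ is_left_brace (oB2 j), add_cyclic (oB2 j), #|TB2 j| = p2 j ^ beta2 j
                & is_trivial_brace (oB2 j)]) ->
  (* alpha : (B_1 x ... x B_m, o) -> Aut(B_(m+1) x ... x B_r, +) homomorphism *)
  (forall y, bijective (alpha y) /\
             forall x x', alpha y (badd oN x x') = badd oN (alpha y x) (alpha y x')) ->
  (forall y y' x, alpha (bcirc oH y y') x = alpha y (alpha y' x)) ->
  (* restriction of alpha to each B_i (i <= m) is nontrivial *)
  (forall i, exists y, only_at oB1 y i /\ exists x, alpha y x != x) ->
  (* the image of alpha acts nontrivially on each B_j (j > m) *)
  (forall j, exists y x, only_at oB2 x j /\ alpha y x != x) ->
  (* A = Abar x Bbar *)
  bijective f ->
  (forall a b, f (add a b) = badd oTot (f a) (f b)) ->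
  (forall a b, f (a * b)%g = bcirc oTot (f a) (f b)) ->
  f @: socle oG = setX (socle oAbar) (setX [set: {dffun forall j, TB2 j}] (I_prod oB1 alpha))
  /\ cyclic ([set: gT] / socle oG).
Proof.
move=> oG oH oN oAbar oBbar oTot pr brace_G _ _ ZgT prime_q prime_pr _ _ pr_lt _ _
  HA HB1 HB2 alpha_aut alpha_morph _ _ [g fK gK] f_add f_circ.
have brace_A i : is_left_brace (oA i) by case: (HA i).
have brace_B1 i : is_left_brace (oB1 i) by case: (HB1 i).
have brace_B2 j : is_left_brace (oB2 j) by case: (HB2 j).
have triv_N : is_trivial_brace oN.
  by move=> x y; apply/ffunP => j; rewrite !ffunE; case: (HB2 j).
have alpha_inj y : injective (alpha y).
  by case: (alpha_aut y) => -[h hK _] _; apply: can_inj hK.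
have add_N := prodOps_add_group (fun j => brace_add_group (brace_B2 j)).
have alpha_bzero y : alpha y (bzero oN) = bzero oN.
  exact: (morph_bzero add_N add_N (proj2 (alpha_aut y))).
have pr_inj : injective pr.
  by move=> k l eq_pr; apply/val_inj; case: (ltngtP k l) => // /pr_lt; rewrite eq_pr ltnn.
have p1E i : p1 i = pr (lshift s i) by rewrite /pr /concat_fun (unsplitK (inl i)).
have p1_prime i : prime (p1 i) by rewrite p1E; case/andP: (prime_pr (lshift s i)).
have p1_inj : injective p1 by move=> i k; rewrite !p1E => /pr_inj/lshift_inj.
have card_B1 i : #|TB1 i| = p1 i ^ beta1 i by case: (HB1 i).
have coprime_B1 := coprime_pfactor_cards p1_prime p1_inj card_B1.
have q_TA i : (q i).-nat #|TA i|.
  by case: (HA i) => _ _ ->; rewrite pnatX pnat_id //; case/andP: (prime_q i).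
have p1_TB1 i : (p1 i).-nat #|TB1 i| by rewrite card_B1 pnatX pnat_id.
split.
  exact: (socle_decomposition brace_G brace_A brace_B1 brace_B2 triv_N coprime_B1
            alpha_inj alpha_morph fK gK f_add f_circ).
exact: (cyclic_quotient_socle brace_G brace_A brace_B1 brace_B2 triv_N coprime_B1
          alpha_inj alpha_morph alpha_bzero fK gK f_add f_circ ZgT q_TA p1_TB1).
Qed.
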